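(* Let $W\in\mathbb{R}^{m\times n}$ have a directed spanning set of $\mathbb{R}^n$ with respect to every $x\in\mathbb{R}^n$, let $x_0,x_1\in\mathbb{R}^n$, and for $a,b\in\mathbb{R}^n$ let $\ell^{a,b}(t)=(1-t)a+tb$, $t\in[0,1]$. Suppose there is $t'\in(0,1)$ such that for all $t\in[0,1]$, $W|_{S(\ell^{x_0,x_1}(t),W)}=W|_{S(x_0,W)}$ if $t<t'$ and $W|_{S(\ell^{x_0,x_1}(t),W)}=W|_{S(x_1,W)}$ if $t>t'$. Suppose further that there is $\delta>0$ such that for every $\delta x\in\mathbb{R}^n$ with $\|\delta x\|_2<\delta$ there is $\delta t$ with $W|_{S(\ell^{x_0,x_1+\delta x}(t),W)}=W|_{S(x_0,W)}$ if $t<t'+\delta t$ and $W|_{S(\ell^{x_0,x_1+\delta x}(t),W)}=W|_{S(x_1,W)}$ if $t>t'+\delta t$. Then $$\|\operatorname{ReLU}(Wx_0)-\operatorname{ReLU}(Wx_1)\|_2\ge\frac{1}{\sqrt2}\min\big(\sigma(W|_{S(x_0,W)}),\sigma(W|_{S(x_1,W)})\big)\|x_0-x_1\|_2.$$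
   Context: For $W$ with rows $w_1,\dots,w_m$ and $x\in\mathbb{R}^n$, $S(x,W)=\{j:\langle w_j,x\rangle\ge 0\}$; for an index set $\mathcal{I}$, $W|_{\mathcal{I}}$ is the $m\times n$ matrix whose $j$-th row is $w_j$ if $j\in\mathcal{I}$ and zero otherwise. $\sigma(M)$ is the smallest singular value of $M$. $W$ has a directed spanning set of $\mathbb{R}^n$ w.r.t. $x$ if $\{w_j: j\in S(x,W)\}$ spans $\mathbb{R}^n$. $\operatorname{ReLU}(y)=\max(y,0)$ componentwise. *)

From HB Require Import structures.
From mathcomp Require Import all_boot all_order all_algebra.
From mathcomp Require Import boolp classical_sets reals.
Set Implicit Arguments. Unset Strict Implicit. Unset Printing Implicit Defensive.
Import Order.TTheory GRing.Theory Num.Theory.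
Local Open Scope ring_scope.

(* Vectors of R^n are column vectors 'cV[R]_n; W : 'M[R]_(m,n) has rows w_j,
   so <w_j, x> = (W *m x) j 0. *)

Definition Sact (R : realType) (m n : nat) (x : 'cV[R]_n) (W : 'M[R]_(m, n))
  : {set 'I_m} := [set j | 0 <= (W *m x) j 0].

Definition restr (R : realType) (m n : nat) (W : 'M[R]_(m, n)) (I : {set 'I_m})
  : 'M[R]_(m, n) := \matrix_(i, j) (if i \in I then W i j else 0).

(* {w_j : j in S(x,W)} spans R^n, i.e. the row space of the matrix whose rows
   are these w_j (other rows zero) is all of R^n. *)
Definition directed_spanning (R : realType) (m n : nat) (W : 'M[R]_(m, n))
  (x : 'cV[R]_n) : Prop := row_full (restr W (Sact x W)).

Definition norm2 (R : realType) (k : nat) (v : 'cV[R]_k) : R :=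
  Num.sqrt (\sum_(i < k) v i 0 ^+ 2).

Definition relu (R : realType) (k : nat) (v : 'cV[R]_k) : 'cV[R]_k :=
  map_mx (fun y => Num.max y 0) v.

Definition seg (R : realType) (n : nat) (a b : 'cV[R]_n) (t : R) : 'cV[R]_n :=
  (1 - t) *: a + t *: b.

(* smallest singular value of M : 'M_(m,n) (used with m >= n):
   square root of the smallest eigenvalue of M^T M. *)
Definition sigma_min (R : realType) (m n : nat) (M : 'M[R]_(m, n)) : R :=
  Num.sqrt (inf [set a : R | eigenvalue (M^T *m M) a]).

(* Along the segment from x0 to x1 the pre-activation of every neuron is affine
   and, by hypothesis, changes sign only at t', so it vanishes there.  Hence
   ReLU(W x0) - ReLU(W x1) = t' W|S(x0) (x0 - x1) + (1 - t') W|S(x1) (x0 - x1),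
   whose two summands have the same sign in each coordinate; its squared norm is
   therefore at least (t'^2 + (1 - t')^2) sigma^2 |x0 - x1|^2, and
   t'^2 + (1 - t')^2 >= 1/2.  The bound |M y| >= sigma(M) |y| is proved without
   the spectral theorem: the infimum c of the Rayleigh quotients of M^T M is an
   eigenvalue, for otherwise M^T M - c would be positive semidefinite and
   invertible, hence coercive, contradicting the choice of c. *)

From HB Require Import structures.
From mathcomp Require Import all_boot all_order all_algebra.
From mathcomp Require Import boolp classical_sets reals.
From mathcomp Require Import ring lra.
Set Implicit Arguments.
Unset Strict Implicit.
Unset Printing Implicit Defensive.

Import Order.TTheory GRing.Theory Num.Theory.
Local Open Scope ring_scope.

Section Quadratic.
Variable R : realFieldType.

Lemma quadratic_ge0_discr (a b c : R) : 0 <= c ->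
  (forall s, 0 <= a + 2 * s * b + s ^+ 2 * c) -> b ^+ 2 <= a * c.
Proof.
move=> c_ge0 q_ge0; have [c_gt0|] := ltrP 0 c.
  have := q_ge0 (- b / c); rewrite -(ler_pM2r c_gt0) mul0r.
  have -> : (a + 2 * (- b / c) * b + (- b / c) ^+ 2 * c) * c = a * c - b ^+ 2.
    by field; rewrite gt_eqF.
  by rewrite subr_ge0.
move=> c_le0; have c0 : c = 0 by apply/eqP; rewrite eq_le c_le0.
subst c; have [-> | b_neq0] := eqVneq b 0; first by rewrite expr0n mulr0.
have := q_ge0 (- (a + 1) / (2 * b)).
have -> : a + 2 * (- (a + 1) / (2 * b)) * b + (- (a + 1) / (2 * b)) ^+ 2 * 0 = -1.
  by field.
lra.
Qed.

Lemma sqr_weights_ge_half (P X Y t : R) : 0 <= P -> P <= X -> P <= Y ->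
  P / 2 <= t ^+ 2 * X + (1 - t) ^+ 2 * Y.
Proof.
move=> P_ge0 /(ler_wpM2l (sqr_ge0 t)) + /(ler_wpM2l (sqr_ge0 (1 - t))).
have := mulr_ge0 (sqr_ge0 (2 * t - 1)) P_ge0; lra.
Qed.

End Quadratic.

Lemma invsqrt2_mul_le_sqrt (R : rcfType) (c x y : R) : 0 <= c -> 0 <= x ->
  c ^+ 2 * x / 2 <= y -> (Num.sqrt 2)^-1 * c * Num.sqrt x <= Num.sqrt y.
Proof.
move=> c_ge0 x_ge0 le_y; have lhs_ge0 : 0 <= (Num.sqrt 2)^-1 * c * Num.sqrt x.
  by rewrite !mulr_ge0 ?invr_ge0 ?sqrtr_ge0.
rewrite -(ger0_norm lhs_ge0) -sqrtr_sqr ler_wsqrtr //.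
by rewrite !exprMn exprVn !sqr_sqrtr // -mulrA mulrC.
Qed.

Section EuclideanGeometry.
Variable R : realType.
Implicit Types (k : nat).

Definition sqnorm k (v : 'cV[R]_k) : R := \sum_i v i 0 ^+ 2.
Definition dot k (u v : 'cV[R]_k) : R := (u^T *m v) 0 0.

Lemma norm2E k (v : 'cV[R]_k) : norm2 v = Num.sqrt (sqnorm v).
Proof. by []. Qed.

Lemma sqnorm_ge0 k (v : 'cV[R]_k) : 0 <= sqnorm v.
Proof. by apply: sumr_ge0 => i _; rewrite sqr_ge0. Qed.

Lemma sqnorm_eq0 k (v : 'cV[R]_k) : (sqnorm v == 0) = (v == 0).
Proof.
apply/idP/eqP => [|->]; last by rewrite /sqnorm big1 // => i _; rewrite mxE expr0n.
rewrite psumr_eq0 => [/allP v0|i _]; last by rewrite sqr_ge0.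
apply/matrixP => i j; rewrite ord1 mxE.
by apply/eqP; rewrite -sqrf_eq0; apply: v0; rewrite mem_index_enum.
Qed.

Lemma sqnorm_gt0 k (v : 'cV[R]_k) : v != 0 -> 0 < sqnorm v.
Proof. by rewrite lt_def sqnorm_eq0 sqnorm_ge0 andbT. Qed.

Lemma sqnormE k (v : 'cV[R]_k) : sqnorm v = dot v v.
Proof. by rewrite /dot mxE; apply: eq_bigr => i _; rewrite mxE expr2. Qed.

Lemma dotC k (u v : 'cV[R]_k) : dot u v = dot v u.
Proof.
have -> : dot u v = (u^T *m v)^T 0 0 by rewrite mxE.
by rewrite trmx_mul trmxK.
Qed.

Lemma dot_mulmx_sym k (N : 'M[R]_k) u v : N^T = N -> dot u (N *m v) = dot v (N *m u).
Proof. by move=> NT; rewrite dotC /dot trmx_mul NT mulmxA. Qed.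

Lemma dotDr k (u v w : 'cV[R]_k) : dot u (v + w) = dot u v + dot u w.
Proof. by rewrite /dot mulmxDr mxE. Qed.

Lemma dotZr k a (u v : 'cV[R]_k) : dot u (a *: v) = a * dot u v.
Proof. by rewrite /dot -scalemxAr mxE. Qed.

Lemma dotDl k (u v w : 'cV[R]_k) : dot (u + v) w = dot u w + dot v w.
Proof. by rewrite dotC dotDr !(dotC w). Qed.

Lemma dotZl k a (u v : 'cV[R]_k) : dot (a *: u) v = a * dot u v.
Proof. by rewrite dotC dotZr dotC. Qed.

Lemma psd_form_CauchySchwarz k (N : 'M[R]_k) (u v : 'cV[R]_k) : N^T = N ->
  (forall z, 0 <= dot z (N *m z)) ->
  dot u (N *m v) ^+ 2 <= dot u (N *m u) * dot v (N *m v).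
Proof.
move=> NT N_psd; apply: quadratic_ge0_discr => // s.
have := N_psd (u + s *: v).
rewrite mulmxDr -scalemxAr !(dotDl, dotDr, dotZl, dotZr) (dot_mulmx_sym v u NT).
by congr (_ <= _); ring.
Qed.

Lemma dot_CauchySchwarz k (u v : 'cV[R]_k) : dot u v ^+ 2 <= sqnorm u * sqnorm v.
Proof.
have := @psd_form_CauchySchwarz k 1%:M u v (trmx1 _ k); rewrite !mul1mx !sqnormE; apply.
by move=> z; rewrite mul1mx -sqnormE sqnorm_ge0.
Qed.

Definition sqfrob m n (P : 'M[R]_(m, n)) : R := \sum_i \sum_j P i j ^+ 2.

Lemma sqfrob_ge0 m n (P : 'M[R]_(m, n)) : 0 <= sqfrob P.
Proof. by apply: sumr_ge0 => i _; apply: sumr_ge0 => j _; rewrite sqr_ge0. Qed.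

Lemma sqnorm_mulmx_le m n (P : 'M[R]_(m, n)) (z : 'cV[R]_n) :
  sqnorm (P *m z) <= sqfrob P * sqnorm z.
Proof.
rewrite [sqnorm _]/sqnorm /sqfrob mulr_suml; apply: ler_sum => i _.
have -> : (P *m z) i 0 = dot (row i P)^T z.
  by rewrite /dot !mxE; apply: eq_bigr => j _; rewrite !mxE.
have -> : \sum_j P i j ^+ 2 = sqnorm (row i P)^T.
  by rewrite /sqnorm; apply: eq_bigr => j _; rewrite !mxE.
exact: dot_CauchySchwarz.
Qed.

Lemma sqnormB k (u v : 'cV[R]_k) :
  sqnorm (u - v) = sqnorm u - 2 * dot u v + sqnorm v.
Proof.
rewrite !sqnormE -scaleN1r !(dotDl, dotDr, dotZl, dotZr) (dotC v u); ring.
Qed.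

Lemma psd_unitmx_coercive k (N : 'M[R]_k) : N^T = N ->
  (forall z, 0 <= dot z (N *m z)) -> N \in unitmx ->
  exists2 K, 0 <= K & forall z, sqnorm z <= K * dot z (N *m z).
Proof.
move=> NT N_psd N_unit; pose L := 1 + sqfrob N.
have L_ge0 : 0 <= L by rewrite addr_ge0 ?sqfrob_ge0.
exists (sqfrob (invmx N) * L) => [|z]; first by rewrite mulr_ge0 ?sqfrob_ge0.
set w := N *m z.
(* 2 <w, N w> <= |w|^2 + |N w|^2 *)
have form_w : dot w (N *m w) <= L * sqnorm w.
  have := sqnorm_ge0 (w - N *m w); rewrite sqnormB.
  have := sqnorm_mulmx_le N w; have := N_psd w; have := sqnorm_ge0 w.
  rewrite /L mulrDl mul1r; lra.
have w_le : sqnorm w <= L * dot z (N *m z).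
  have [/eqP|w_neq0] := eqVneq w 0.
    by rewrite -sqnorm_eq0 => /eqP->; rewrite mulr_ge0.
  rewrite -(ler_pM2l (sqnorm_gt0 w_neq0)) mulrA [sqnorm w * L]mulrC.
  apply: le_trans _ (ler_wpM2r (N_psd z) form_w).
  by have := psd_form_CauchySchwarz w z NT N_psd; rewrite -/w -sqnormE expr2.
have -> : sqnorm z = sqnorm (invmx N *m w) by rewrite mulKmx.
apply: le_trans (sqnorm_mulmx_le _ _) _.
by rewrite -mulrA ler_wpM2l ?sqfrob_ge0.
Qed.

Lemma sigma_min_ge0 m n (A : 'M[R]_(m, n)) : 0 <= sigma_min A.
Proof. exact: sqrtr_ge0. Qed.

Definition rayleigh k (M : 'M[R]_k) : set R :=
  [set dot z (M *m z) / sqnorm z | z in [set z | z != 0]].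

Lemma inf_rayleigh_le k (M : 'M[R]_k) (z : 'cV[R]_k) :
  (forall y, 0 <= dot y (M *m y)) -> inf (rayleigh M) * sqnorm z <= dot z (M *m z).
Proof.
move=> M_psd; have [/eqP|z_neq0] := eqVneq z 0.
  by rewrite -sqnorm_eq0 => /eqP->; rewrite mulr0.
rewrite -ler_pdivlMr ?sqnorm_gt0 //; apply: ge_inf; last by exists z.
by exists 0 => _ [y _ <-]; rewrite divr_ge0 ?sqnorm_ge0.
Qed.

Lemma eigenvalue_rayleigh k (M : 'M[R]_k) a :
  M^T = M -> eigenvalue M a -> rayleigh M a.
Proof.
move=> MT /eigenvalueP [v vM v_neq0]; exists v^T; first by rewrite /= trmx_eq0.
have -> : M *m v^T = a *: v^T by rewrite -[M]MT -trmx_mul vM linearZ.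
by rewrite dotZr -sqnormE mulfK // sqnorm_eq0 trmx_eq0.
Qed.

Lemma inf_rayleigh_eigenvalue k (M : 'M[R]_k) :
  M^T = M -> (forall y, 0 <= dot y (M *m y)) -> (rayleigh M !=set0)%classic ->
  eigenvalue M (inf (rayleigh M)).
Proof.
move=> MT M_psd ray_n0; set c := inf (rayleigh M); set N := M - c%:M.
apply: contraT; rewrite /eigenvalue /eigenspace negbK kermx_eq0 row_free_unit -/N => N_unit.
have NT : N^T = N by rewrite /N linearB /= tr_scalar_mx MT.
have N_form z : dot z (N *m z) = dot z (M *m z) - c * sqnorm z.
  by rewrite mulmxBl mul_scalar_mx -scaleN1r dotDr !dotZr sqnormE; ring.
have N_psd z : 0 <= dot z (N *m z) by rewrite N_form subr_ge0 inf_rayleigh_le.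
have [K K_ge0 K_coer] := psd_unitmx_coercive NT N_psd N_unit.
have K1_gt0 : 0 < K + 1 by lra.
have /(inf_lt ray_n0) [_ [z /= z_neq0 <-]] : c < c + (K + 1)^-1.
  by rewrite ltrDl invr_gt0.
rewrite ltr_pdivrMr ?sqnorm_gt0 // => z_small.
have : dot z (N *m z) * (K + 1) < sqnorm z.
  rewrite -ltr_pdivlMr // N_form; move: z_small; rewrite mulrDl (mulrC _ (sqnorm z)).
  lra.
have := K_coer z; have := N_psd z; nra.
Qed.

Lemma sqnorm_mulmxE m n (A : 'M[R]_(m, n)) z : sqnorm (A *m z) = dot z (A^T *m A *m z).
Proof. by rewrite sqnormE /dot trmx_mul !mulmxA. Qed.

Lemma sigma_min_sqr_le m n (A : 'M[R]_(m, n)) (y : 'cV[R]_n) :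
  sigma_min A ^+ 2 * sqnorm y <= sqnorm (A *m y).
Proof.
rewrite /sigma_min; set M := A^T *m A; set E := (X in Num.sqrt (inf X)).
have MT : M^T = M by rewrite trmx_mul trmxK.
have M_psd z : 0 <= dot z (M *m z) by rewrite -sqnorm_mulmxE sqnorm_ge0.
have [/eqP|y_neq0] := eqVneq y 0.
  by rewrite -sqnorm_eq0 => /eqP->; rewrite mulr0 sqnorm_ge0.
have ray_n0 : (rayleigh M !=set0)%classic by exists (dot y (M *m y) / sqnorm y), y.
set c := inf (rayleigh M).
have c_ge0 : 0 <= c.
  by apply: lb_le_inf => // _ [z _ <-]; rewrite divr_ge0 ?sqnorm_ge0.
have infE_le : inf E <= c.
  apply: ge_inf; last exact: inf_rayleigh_eigenvalue.
  by exists 0 => a /(eigenvalue_rayleigh MT) [z _ <-]; rewrite divr_ge0 ?sqnorm_ge0.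
have sigma_le : Num.sqrt (inf E) ^+ 2 <= c.
  have [E_lt0|E_ge0] := ltrP (inf E) 0.
    by rewrite ltr0_sqrtr // expr0n.
  by rewrite sqr_sqrtr.
rewrite sqnorm_mulmxE -/M; apply: le_trans _ (inf_rayleigh_le y M_psd).
by rewrite ler_wpM2r ?sqnorm_ge0.
Qed.

Lemma sqnorm_add_same_sign k (p q : 'cV[R]_k) a b :
  0 <= a * b -> (forall i, 0 <= p i 0 * q i 0) ->
  a ^+ 2 * sqnorm p + b ^+ 2 * sqnorm q <= sqnorm (a *: p + b *: q).
Proof.
move=> ab_ge0 pq_ge0; rewrite /sqnorm !mulr_sumr -big_split /=; apply: ler_sum => i _.
have := mulr_ge0 ab_ge0 (pq_ge0 i); rewrite !mxE.
set x := p i 0; set y := q i 0.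
have -> : (a * x + b * y) ^+ 2 = a ^+ 2 * x ^+ 2 + b ^+ 2 * y ^+ 2 + 2 * (a * b * (x * y)).
  by ring.
lra.
Qed.

End EuclideanGeometry.

Section SignChange.
Variable R : realFieldType.
Implicit Types a b s t : R.

Lemma affine_root_at_sign_change a b t : 0 < t < 1 ->
  (forall s, 0 <= s <= 1 -> s < t -> 0 <= (1 - s) * a + s * b) ->
  (forall s, 0 <= s <= 1 -> t < s -> (1 - s) * a + s * b < 0) ->
  (1 - t) * a + t * b = 0.
Proof.
move=> /andP [t_gt0 t_lt1] f_ge0 f_lt0.
have a_ge0 : 0 <= a by move: (f_ge0 0); rewrite subr0 mul1r mul0r addr0; apply; lra.
have b_lt0 : b < 0 by move: (f_lt0 1); rewrite subrr mul0r mul1r add0r; apply; lra.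
have e_gt0 : 0 < a - b by lra.
pose r := a / (a - b).
have fE s : (1 - s) * a + s * b = (a - b) * (r - s) by rewrite /r; field; rewrite gt_eqF.
have r_ge0 : 0 <= r by rewrite divr_ge0 // ltW.
have r_le1 : r <= 1 by rewrite ler_pdivrMr // mul1r; lra.
rewrite fE; apply/eqP; rewrite mulf_eq0 gt_eqF //= subr_eq0 eq_le; apply/andP; split.
  rewrite leNgt; apply/negP => t_lt_r.
  have : (a - b) * (r - (t + r) / 2) < 0 by rewrite -fE; apply: f_lt0; lra.
  nra.
rewrite leNgt; apply/negP => r_lt_t.
have : 0 <= (a - b) * (r - (r + t) / 2) by rewrite -fE; apply: f_ge0; lra.
nra.
Qed.

Lemma relu_sub_at_sign_change a b t : 0 < t < 1 ->
  (forall s, 0 <= s <= 1 -> s < t -> (0 <= (1 - s) * a + s * b) = (0 <= a)) ->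
  (forall s, 0 <= s <= 1 -> t < s -> (0 <= (1 - s) * a + s * b) = (0 <= b)) ->
  Num.max a 0 - Num.max b 0 =
    t * (if 0 <= a then a - b else 0) + (1 - t) * (if 0 <= b then a - b else 0).
Proof.
move=> t01 sgn_a sgn_b; have [a_ge0|a_lt0] := leP 0 a; have [b_ge0|b_lt0] := leP 0 b.
- by ring.
- have : (1 - t) * a + t * b = 0.
    apply: affine_root_at_sign_change => // s s01 st; first by rewrite sgn_a.
    by rewrite ltNge sgn_b // -ltNge.
  lra.
- have : (1 - (1 - t)) * b + (1 - t) * a = 0.
    have flip s : (1 - s) * b + s * a = (1 - (1 - s)) * a + (1 - s) * b by ring.
    apply: affine_root_at_sign_change => [|s s01 st|s s01 st]; rewrite ?flip.
    + lra.
    + by rewrite sgn_b //; lra.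
    + by rewrite ltNge sgn_a -?ltNge //; lra.
  lra.
- by ring.
Qed.

End SignChange.

Section ReluSegment.
Variables (R : realType) (m n : nat) (W : 'M[R]_(m, n)).

Lemma restr_mulmxE (I : {set 'I_m}) (x : 'cV[R]_n) i :
  (restr W I *m x) i 0 = if i \in I then (W *m x) i 0 else 0.
Proof.
rewrite !mxE; case: ifP => iI; first by apply: eq_bigr => j _; rewrite mxE iI.
by apply: big1 => j _; rewrite mxE iI mul0r.
Qed.

Lemma restr_mulmx_same_sign (I J : {set 'I_m}) (x : 'cV[R]_n) i :
  0 <= (restr W I *m x) i 0 * (restr W J *m x) i 0.
Proof.
by rewrite !restr_mulmxE; do 2!case: ifP => _; rewrite ?(mul0r, mulr0) // -expr2 sqr_ge0.
Qed.

Lemma restr_Sact_sign (x y : 'cV[R]_n) i :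
  restr W (Sact x W) = restr W (Sact y W) ->
  (0 <= (W *m x) i 0) = (0 <= (W *m y) i 0).
Proof.
move=> eq_restr; have [/existsP [k Wik_neq0]|/existsPn row0] := boolP [exists k, W i k != 0].
  suff : (i \in Sact x W) = (i \in Sact y W) by rewrite !inE.
  move/matrixP/(_ i k): eq_restr; rewrite !mxE.
  by do 2!case: (i \in _) => //; [move=> Wik0 | move=> /esym Wik0];
    rewrite Wik0 eqxx in Wik_neq0.
have W0 z : (W *m z) i 0 = 0.
  by rewrite mxE big1 // => k _; move/negPn/eqP: (row0 k) => ->; rewrite mul0r.
by rewrite !W0.
Qed.

Lemma mulmx_seg (x0 x1 : 'cV[R]_n) s i :
  (W *m seg x0 x1 s) i 0 = (1 - s) * (W *m x0) i 0 + s * (W *m x1) i 0.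
Proof. by rewrite /seg mulmxDr -!scalemxAr !mxE. Qed.

Lemma relu_sub_segment (x0 x1 : 'cV[R]_n) t : 0 < t < 1 ->
  (forall s, 0 <= s <= 1 ->
     (s < t -> restr W (Sact (seg x0 x1 s) W) = restr W (Sact x0 W)) /\
     (t < s -> restr W (Sact (seg x0 x1 s) W) = restr W (Sact x1 W))) ->
  relu (W *m x0) - relu (W *m x1) =
    t *: (restr W (Sact x0 W) *m (x0 - x1)) +
    (1 - t) *: (restr W (Sact x1 W) *m (x0 - x1)).
Proof.
move=> t01 switch; apply/matrixP => i j; rewrite ord1.
have sgn_x0 s : 0 <= s <= 1 -> s < t ->
    (0 <= (1 - s) * (W *m x0) i 0 + s * (W *m x1) i 0) = (0 <= (W *m x0) i 0).
  by move=> s01 st; rewrite -mulmx_seg; apply/restr_Sact_sign/(switch s s01).1.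
have sgn_x1 s : 0 <= s <= 1 -> t < s ->
    (0 <= (1 - s) * (W *m x0) i 0 + s * (W *m x1) i 0) = (0 <= (W *m x1) i 0).
  by move=> s01 st; rewrite -mulmx_seg; apply/restr_Sact_sign/(switch s s01).2.
(* Locking mulmx keeps mxE from expanding the matrix products. *)
rewrite [@mulmx _ _ _ _]lock !mxE -lock !restr_mulmxE !inE mulmxBr.
rewrite [@mulmx _ _ _ _]lock !mxE -lock.
exact: relu_sub_at_sign_change.
Qed.

End ReluSegment.

Theorem lemma6 (R : realType) (m n : nat) (W : 'M[R]_(m, n)) (x0 x1 : 'cV[R]_n) :
  (forall x : 'cV[R]_n, directed_spanning W x) ->
  (exists t' : R, 0 < t' < 1 /\
     (forall t : R, 0 <= t <= 1 ->
        (t < t' -> restr W (Sact (seg x0 x1 t) W) = restr W (Sact x0 W)) /\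
        (t' < t -> restr W (Sact (seg x0 x1 t) W) = restr W (Sact x1 W))) /\
     (exists delta : R, 0 < delta /\
        forall dx : 'cV[R]_n, norm2 dx < delta ->
          exists dt : R, forall t : R, 0 <= t <= 1 ->
            (t < t' + dt ->
               restr W (Sact (seg x0 (x1 + dx) t) W) = restr W (Sact x0 W)) /\
            (t' + dt < t ->
               restr W (Sact (seg x0 (x1 + dx) t) W) = restr W (Sact x1 W)))) ->
  norm2 (relu (W *m x0) - relu (W *m x1)) >=
    (Num.sqrt 2)^-1 * Num.min (sigma_min (restr W (Sact x0 W)))
                              (sigma_min (restr W (Sact x1 W))) * norm2 (x0 - x1).
Proof.
move=> _ [t [t01 [switch _]]].
rewrite !norm2E (relu_sub_segment t01 switch).
set A := restr W _; set B := restr W _; set d := x0 - x1.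
have := sigma_min_sqr_le A d; have := sigma_min_sqr_le B d.
have := sigma_min_ge0 A; have := sigma_min_ge0 B.
move: (sigma_min A) (sigma_min B) => sA sB sB_ge0 sA_ge0 sB_le sA_le.
have min_sqr_le s : 0 <= s -> Num.min sA sB <= s ->
    Num.min sA sB ^+ 2 * sqnorm d <= s ^+ 2 * sqnorm d.
  by move=> s_ge0 min_le; rewrite ler_wpM2r ?sqnorm_ge0 // lerXn2r ?nnegrE ?le_min ?sA_ge0.
apply: invsqrt2_mul_le_sqrt; rewrite ?le_min ?sA_ge0 ?sqnorm_ge0 //.
apply: le_trans (sqnorm_add_same_sign _ (restr_mulmx_same_sign _ _ _ _)); last first.
  by rewrite mulr_ge0 //; lra.
apply: sqr_weights_ge_half; first by rewrite mulr_ge0 ?sqr_ge0 ?sqnorm_ge0.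
  by apply: le_trans sA_le; rewrite min_sqr_le // ge_min lexx.
by apply: le_trans sB_le; rewrite min_sqr_le // ge_min lexx orbT.
Qed.
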